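(* Let $F=(A,R)$ be an abstract argumentation framework, $S$ an initial set of $F$, and $(A',R')$ the strongly connected component of $F$ containing $S$. (1) If $S$ is unattacked then $|A'|=1$. (2) If $S$ is challenged or unchallenged then $|A'|>1$. (3) If $S$ is challenged and $S'$ is an initial set of $F$ with $S'\to S$, then the strongly connected component containing $S'$ equals the one containing $S$.
   Context: An abstract argumentation framework is a pair $F=(A,R)$ with $A$ finite and $R\subseteq A\times A$ ($a\to b$ means $(a,b)\in R$). $S^+=\{a\mid\exists b\in S:b\to a\}$, $S^-=\{a\mid\exists b\in S: a\to b\}$, and $S\to S'$ means $S^+\cap S'\neq\emptyset$. $S$ is admissible if conflict-free and every attacker of an element of $S$ is attacked by some element of $S$. An initial set is a non-empty admissible set with no non-empty admissible proper subset. An initial set $S$ is unattacked if $S^-=\emptyset$; unchallenged if $S^-\neq\emptyset$ and no initial set $S'$ has $S'\to S$; challenged if some initial set $S'$ has $S'\to S$. A strongly connected component of $F$ is a maximal $A'\subseteq A$ (with induced attacks) such that any two arguments in $A'$ are joined by a directed path within $A'$; every initial set is contained in a single strongly connected component. *)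

From mathcomp Require Import all_boot.
Set Implicit Arguments. Unset Strict Implicit. Unset Printing Implicit Defensive.

(* An argumentation framework: arguments form a finite type T, attack
   relation Ra : rel T  (Ra a b  means  a -> b). *)
Section AF.
Variables (T : finType) (Ra : rel T).

Definition splus (S : {set T}) : {set T} := [set a | [exists b in S, Ra b a]].
Definition sminus (S : {set T}) : {set T} := [set a | [exists b in S, Ra a b]].
Definition set_attacks (S S' : {set T}) : bool := splus S :&: S' != set0.

Definition conflict_free (S : {set T}) : bool :=
  [forall a in S, forall b in S, ~~ Ra a b].
Definition admissible (S : {set T}) : bool :=
  conflict_free S &&
  [forall a in S, forall b, Ra b a ==> [exists c in S, Ra c b]].
Definition initial (S : {set T}) : bool :=
  (S != set0) && admissible S &&
  [forall S' : {set T}, ((S' \proper S) && (S' != set0)) ==> ~~ admissible S'].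

Definition unattacked (S : {set T}) : bool := sminus S == set0.
Definition unchallenged (S : {set T}) : bool :=
  (sminus S != set0) &&
  [forall S' : {set T}, initial S' ==> ~~ set_attacks S' S].
Definition challenged (S : {set T}) : bool :=
  [exists S' : {set T}, initial S' && set_attacks S' S].

Definition induced (B : {set T}) : rel T :=
  fun u v => [&& Ra u v, u \in B & v \in B].
Definition strongly_connected (B : {set T}) : bool :=
  [forall x in B, forall y in B, connect (induced B) x y].
Definition is_scc (B : {set T}) : Prop :=
  strongly_connected B /\
  forall C : {set T}, B \proper C -> ~~ strongly_connected C.
End AF.

(* Only the admissibility of S matters.  If b attacks some a in S, then S
   counter-attacks b from some c in S, so c -> b -> a is a path through b
   between two members of the component of S, and maximality of components
   puts b into it.  This gives (2), as b <> a by conflict-freeness, and (3),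
   as the attacker of S in S' then lies in both components.  For (1), any
   other member of the component reaches S along a path whose last edge is
   an attack on S. *)
From mathcomp Require Import all_boot.
Set Implicit Arguments. Unset Strict Implicit. Unset Printing Implicit Defensive.

Section StronglyConnected.
Variables (T : finType) (Ra : rel T).

Lemma strongly_connectedP (B : {set T}) :
  reflect {in B &, forall x y, connect (induced Ra B) x y}
          (strongly_connected Ra B).
Proof.
apply: (iffP forallP) => [scB x y xB yB | scB x].
  by have /forallP/(_ y) := implyP (scB x) xB; rewrite yB.
by apply/implyP => xB; apply/forallP => y; apply/implyP; apply: scB.
Qed.

Lemma connect_induced_sub (B D : {set T}) x y : B \subset D ->
  connect (induced Ra B) x y -> connect (induced Ra D) x y.
Proof.
move=> sBD; apply: connect_sub => u v /and3P [uv uB vB].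
by apply: connect1; rewrite /induced uv !(subsetP sBD).
Qed.

Lemma connect_induced1 (B : {set T}) x y :
  Ra x y -> x \in B -> y \in B -> connect (induced Ra B) x y.
Proof. by move=> xy xB yB; apply: connect1; rewrite /induced xy xB yB. Qed.

Lemma strongly_connected_set1 x : strongly_connected Ra [set x].
Proof. by apply/strongly_connectedP => y z /set1P -> /set1P ->. Qed.

Lemma strongly_connectedU (B C : {set T}) x y :
  strongly_connected Ra B -> strongly_connected Ra C -> x \in B -> y \in C ->
  connect (induced Ra (B :|: C)) x y -> connect (induced Ra (B :|: C)) y x ->
  strongly_connected Ra (B :|: C).
Proof.
move=> /strongly_connectedP scB /strongly_connectedP scC xB yC xy yx.
have inB u v : u \in B -> v \in B -> connect (induced Ra (B :|: C)) u v.
  by move=> uB vB; apply: connect_induced_sub (subsetUl B C) (scB u v uB vB).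
have inC u v : u \in C -> v \in C -> connect (induced Ra (B :|: C)) u v.
  by move=> uC vC; apply: connect_induced_sub (subsetUr B C) (scC u v uC vC).
apply/strongly_connectedP => u v /setUP [uB | uC] /setUP [vB | vC].
- exact: inB.
- exact: connect_trans (inB _ _ uB xB) (connect_trans xy (inC _ _ yC vC)).
- exact: connect_trans (inC _ _ uC yC) (connect_trans yx (inB _ _ xB vB)).
- exact: inC.
Qed.

(* Every path into [a] from elsewhere ends with an attack on [a]. *)
Lemma strongly_connected_unattacked (B : {set T}) a :
  strongly_connected Ra B -> a \in B -> (forall b, ~~ Ra b a) -> B = [set a].
Proof.
move=> /strongly_connectedP scB aB no_att; apply/setP => y; rewrite inE.
apply/idP/eqP => [yB | ->] //.
have /connectP [[|z p] /= path_p ->] // :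
  connect [rel u v | induced Ra B v u] a y by rewrite connect_rev /= scB.
by case/andP: path_p => /and3P [za _ _]; move: (no_att z); rewrite za.
Qed.

End StronglyConnected.

Section Components.
Variables (T : finType) (Ra : rel T) (A : {set T}).
Hypothesis sccA : is_scc Ra A.

Lemma scc_maximal (D : {set T}) :
  strongly_connected Ra D -> A \subset D -> D = A.
Proof.
move=> scD sAD; apply/eqP; rewrite eq_sym eqEproper sAD /=.
by apply/negP => /sccA.2; rewrite scD.
Qed.

Lemma scc_path2_closed a b c :
  a \in A -> c \in A -> Ra a b -> Ra b c -> b \in A.
Proof.
move=> aA cA ab bc.
have bAb : b \in A :|: [set b] by rewrite !inE eqxx orbT.
have scAb : strongly_connected Ra (A :|: [set b]).
  apply: (strongly_connectedU sccA.1 (strongly_connected_set1 Ra b) aA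
            (set11 b)).
    by apply: connect_induced1; rewrite // inE aA.
  apply: connect_trans (connect_induced1 bc bAb _) _; first by rewrite inE cA.
  apply: connect_induced_sub (subsetUl A [set b]) _.
  by apply/(strongly_connectedP _ _ sccA.1).
by rewrite -(scc_maximal scAb (subsetUl A [set b])).
Qed.

End Components.

Lemma scc_eq (T : finType) (Ra : rel T) (A B : {set T}) x :
  is_scc Ra A -> is_scc Ra B -> x \in A -> x \in B -> B = A.
Proof.
move=> sccA sccB xA xB.
have scBA : strongly_connected Ra (B :|: A).
  by apply: (strongly_connectedU sccB.1 sccA.1 xB xA); apply: connect0.
rewrite -(scc_maximal sccA scBA (subsetUr B A)).
by rewrite (scc_maximal sccB scBA (subsetUl B A)).
Qed.

Section Admissibility.
Variables (T : finType) (Ra : rel T).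
Implicit Types S : {set T}.

Lemma set_attacksP S' S :
  reflect (exists x y, [/\ x \in S', y \in S & Ra x y]) (set_attacks Ra S' S).
Proof.
rewrite /set_attacks; apply: (iffP (set0Pn _)) => [[y] | [x] [y] [xS' yS xy]].
  by rewrite !inE => /andP [/existsP [x /andP [xS' xy]] yS]; exists x, y.
by exists y; rewrite !inE yS andbT; apply/existsP; exists x; rewrite xS'.
Qed.

Lemma unattackedP S b a : unattacked Ra S -> a \in S -> ~~ Ra b a.
Proof.
move=> /eqP noS aS; apply/negP => ba.
suff : b \in sminus Ra S by rewrite noS inE.
by rewrite inE; apply/existsP; exists a; rewrite aS.
Qed.

Lemma attacked_sminus S :
  challenged Ra S \/ unchallenged Ra S -> sminus Ra S != set0.
Proof.
case=> [/existsP [S' /andP [_ /set_attacksP [x [y [_ yS xy]]]]] | /andP [] //].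
by apply/set0Pn; exists x; rewrite inE; apply/existsP; exists y; rewrite yS.
Qed.

Lemma admissible_attacker_neq S a b : admissible Ra S -> a \in S -> Ra b a ->
  a != b.
Proof.
case/andP=> /forallP /(_ a) cfS _ aS ba; apply: contraTneq ba => <-.
by move: cfS; rewrite aS => /forallP /(_ a); rewrite aS.
Qed.

Lemma admissible_counterattack S a b : admissible Ra S -> a \in S -> Ra b a ->
  exists2 c, c \in S & Ra c b.
Proof.
case/andP=> _ /forallP /(_ a) defS aS ba.
move: defS; rewrite aS => /forallP /(_ b).
by rewrite ba => /existsP [c /andP [cS cb]]; exists c.
Qed.

Lemma initial_admissible S : initial Ra S -> admissible Ra S.
Proof. by case/andP=> /andP []. Qed.

Lemma initial_neq0 S : initial Ra S -> S != set0.
Proof. by case/andP=> /andP []. Qed.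

End Admissibility.

Theorem proposition3 (T : finType) (Ra : rel T) (S A' : {set T}) :
  initial Ra S -> is_scc Ra A' -> S \subset A' ->
  [/\ (unattacked Ra S -> #|A'| = 1),
      (challenged Ra S \/ unchallenged Ra S -> 1 < #|A'|) &
      (forall S' B' : {set T}, initial Ra S' -> set_attacks Ra S' S ->
         is_scc Ra B' -> S' \subset B' -> B' = A')].
Proof.
move=> iS sccA /subsetP sSA; have admS := initial_admissible iS.
split.
- move=> noS; have /set0Pn [a aS] := initial_neq0 iS.
  rewrite (strongly_connected_unattacked sccA.1 (sSA a aS)) ?cards1 // => b.
  exact: unattackedP noS aS.
- move=> /attacked_sminus /set0Pn [b].
  rewrite inE => /existsP [a /andP [aS ba]].
  have [c cS cb] := admissible_counterattack admS aS ba.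
  apply/card_gt1P; exists a, b; split.
  + exact: sSA.
  + exact: (scc_path2_closed sccA (sSA _ cS) (sSA _ aS) cb ba).
  + exact: admissible_attacker_neq admS aS ba.
- move=> S' B' _ /set_attacksP [x [y [xS' yS xy]]] sccB /subsetP sSB.
  have [z zS zx] := admissible_counterattack admS yS xy.
  have xA' := scc_path2_closed sccA (sSA _ zS) (sSA _ yS) zx xy.
  exact: scc_eq sccA sccB xA' (sSB x xS').
Qed.
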